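(* There exists a temporal graph $\mathcal G$ (in the ''strict'' setting, i.e. with strict journeys) such that no simple temporal graph $\mathcal H$ has a strict-journey reachability graph isomorphic to $\mathcal C(\mathcal G)$. (For instance, $\mathcal G$ the path $a-b-c-d$ with $\lambda(ab)=\{1\}$, $\lambda(bc)=\{1,2\}$, $\lambda(cd)=\{2\}$.)
   Context: A temporal graph is a triple $\mathcal G=(V,E,\lambda)$ where $V$ is a finite vertex set, $E$ is a set of undirected edges on $V$, and $\lambda:E\to 2^{\mathbb N}\setminus\{\emptyset\}$ assigns to each edge a nonempty set of presence times. The footprint of $\mathcal G$ is the static graph $(V,E)$. A contact is a pair $(e,t)$ with $e\in E$ and $t\in\lambda(e)$. A journey from $u$ to $v$ is a sequence of contacts $(e_1,t_1),\dots,(e_k,t_k)$, $k\ge 1$, such that $e_1,\dots,e_k$ form a path from $u$ to $v$ in the footprint and $t_1\le t_2\le\dots\le t_k$ (a non-strict journey); it is strict if $t_1<t_2<\dots<t_k$. $\mathcal G$ is simple if $|\lambda(e)|=1$ for every edge $e$. The reachability graph $\mathcal C(\mathcal G)$ (with respect to a chosen journey notion) is the directed graph on $V$ having an arc $(u,v)$, $u\neq v$, if and only if there is a journey from $u$ to $v$. Reachability graphs are compared up to isomorphism of directed graphs. *)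

From mathcomp Require Import all_boot.
Set Implicit Arguments. Unset Strict Implicit. Unset Printing Implicit Defensive.

(* A temporal graph on a finite vertex type V:
   - edge : the (undirected) footprint edge relation, symmetric, irreflexive;
   - lab u v t : time t belongs to lambda({u,v}); symmetric in u v, only on
     edges, and nonempty on every edge. *)
Record tgraph (V : finType) := TGraph {
  edge : rel V;
  lab : V -> V -> nat -> bool
}.

Definition valid_tgraph (V : finType) (G : tgraph V) : Prop :=
  (forall u v, edge G u v = edge G v u) /\
  (forall u, ~~ edge G u u) /\
  (forall u v t, lab G u v t = lab G v u t) /\
  (forall u v t, lab G u v t -> edge G u v) /\
  (forall u v, edge G u v -> exists t, lab G u v t).

Definition simple_tgraph (V : finType) (G : tgraph V) : Prop :=
  forall u v, edge G u v -> exists t, forall t', lab G u v t' <-> t' = t.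

(* A strict journey from x: a sequence p of (vertex, time) pairs; the i-th
   pair (w_i, t_i) means that the i-th contact is the edge {w_{i-1}, w_i}
   (with w_0 = x) at time t_i. *)
Fixpoint sjourney_from (V : finType) (G : tgraph V) (x : V) (tprev : option nat)
    (p : seq (V * nat)) : bool :=
  match p with
  | [::] => true
  | (w, t) :: p' =>
      lab G x w t &&
      (if tprev is Some s then s < t else true) &&
      sjourney_from G w (Some t) p'
  end.

Definition strict_journey (V : finType) (G : tgraph V) (u v : V)
    (p : seq (V * nat)) : Prop :=
  [/\ p != [::], sjourney_from G u None p, uniq (u :: map fst p)
    & last u (map fst p) = v].

Definition sreach (V : finType) (G : tgraph V) (u v : V) : Prop :=
  u <> v /\ exists p, strict_journey G u v p.

Definition digraph_iso (V W : finType) (R : V -> V -> Prop) (S : W -> W -> Prop)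
  : Prop :=
  exists f : V -> W, bijective f /\ forall u v, R u v <-> S (f u) (f v).

From mathcomp Require Import all_boot.

Set Implicit Arguments.
Unset Strict Implicit.
Unset Printing Implicit Defensive.

(* A strict journey from a vertex a whose footprint neighbourhood is the path
   a - b - c - d crosses ab, bc, cd in this order, with increasing times.  In the
   temporal path with lambda(ab) = {1}, lambda(bc) = {1,2}, lambda(cd) = {2}, a
   reaches c and b reaches d (using the two times of bc), but a does not reach d.
   There, mutually reachable vertices are exactly the adjacent ones, whereas
   adjacent vertices of any temporal graph reach each other; so an isomorphism
   onto the reachability graph of H makes the footprint of H a subgraph of that
   path.  If H is simple, the single time on bc glues the journeys a -> c and
   b -> d into a journey a -> d. *)

Section Journeys.

Variables (V : finType) (G : tgraph V).

Lemma strict_journey_first_hop u v p :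
  strict_journey G u v p -> exists w s q, p = (w, s) :: q /\ lab G u w s.
Proof.
by case: p => [|[w s] q] [] //= _ /andP[/andP[uw _] _] _ _; exists w, s, q.
Qed.

Lemma strict_journey_next_hop u v w s q :
  strict_journey G u v ((w, s) :: q) -> w != v ->
  exists w' s' q', [/\ q = (w', s') :: q', lab G w w' s', s < s', w' != u
                     & strict_journey G w v q].
Proof.
case=> _ /= /andP[_ Jq] /andP[uF wF] lastE wNv.
case: q Jq uF wF lastE => [|[w' s'] q'] /=.
  by move=> _ _ _ lastE; rewrite lastE eqxx in wNv.
move=> /andP[/andP[ww' ss'] Jq'] uF /andP[w'F q'F] lastE.
exists w', s', q'; split=> //.
  by apply: contraNneq uF => ->; rewrite !inE eqxx orbT.
by split=> //=; rewrite ?ww' ?Jq' ?w'F.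
Qed.

Lemma edge_sreach u v : valid_tgraph G -> edge G u v -> sreach G u v.
Proof.
move=> [_ [irr [_ [_ ne]]]] uv.
have uNv : u != v by apply: contraNneq (irr u) => {2}->.
split; first exact/eqP.
have [t uvt] := ne _ _ uv.
by exists [:: (v, t)]; split; rewrite //= ?uvt // inE andbT.
Qed.

End Journeys.

Section PathShaped.

Variables (V : finType) (G : tgraph V) (a b c d : V).
Hypothesis lab_edge : forall u v t, lab G u v t -> edge G u v.
Hypotheses (nbr_a : forall y, edge G a y -> y = b)
           (nbr_b : forall y, edge G b y -> y = a \/ y = c)
           (nbr_c : forall y, edge G c y -> y = b \/ y = d).
Hypothesis abcd_uniq : uniq [:: a; b; c; d].

Let path_distinct : [/\ b != c, a != d, b != d & c != d].
Proof.
move: abcd_uniq => /and4P[]; rewrite !inE !negb_or.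
by move=> /and3P[_ _ ->] /andP[-> ->] ->.
Qed.

Lemma sreach_path_ac :
  sreach G a c -> exists t1 t2, [/\ lab G a b t1, lab G b c t2 & t1 < t2].
Proof.
have [bc _ _ _] := path_distinct.
case=> _ [p J]; have [w [s [q [Ep ab]]]] := strict_journey_first_hop J; subst p.
have Ew := nbr_a (lab_edge ab); subst w.
have [w' [s' [_ [_ bw' ss' w'a _]]]] := strict_journey_next_hop J bc.
case: (nbr_b (lab_edge bw')) => Ew'; first by rewrite Ew' eqxx in w'a.
by exists s, s'; rewrite -Ew'.
Qed.

Lemma sreach_path_bd :
  sreach G b d -> exists t2 t3, [/\ lab G b c t2, lab G c d t3 & t2 < t3].
Proof.
have [_ ad _ cd] := path_distinct.
case=> _ [p J]; have [w [s [q [Ep bw]]]] := strict_journey_first_hop J; subst p.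
case: (nbr_b (lab_edge bw)) => Ew; subst w.
  have [w' [s' [_ [_ aw' _ w'b _]]]] := strict_journey_next_hop J ad.
  by rewrite (nbr_a (lab_edge aw')) eqxx in w'b.
have [w' [s' [_ [_ cw' ss' w'b _]]]] := strict_journey_next_hop J cd.
case: (nbr_c (lab_edge cw')) => Ew'; first by rewrite Ew' eqxx in w'b.
by exists s, s'; rewrite -Ew'.
Qed.

Lemma sreach_path_ad : sreach G a d ->
  exists t1 t2 t3, [/\ lab G a b t1, lab G b c t2, lab G c d t3 & t1 < t2 < t3].
Proof.
have [_ _ bd cd] := path_distinct.
case=> _ [p J]; have [w [s [q [Ep ab]]]] := strict_journey_first_hop J; subst p.
have Ew := nbr_a (lab_edge ab); subst w.
have [w' [s' [q' [Eq bw' ss' w'a J']]]] := strict_journey_next_hop J bd.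
case: (nbr_b (lab_edge bw')) => Ew'; first by rewrite Ew' eqxx in w'a.
subst q w'.
have [w'' [s'' [_ [_ cw'' s's'' w''b _]]]] := strict_journey_next_hop J' cd.
case: (nbr_c (lab_edge cw'')) => Ew''; first by rewrite Ew'' eqxx in w''b.
by exists s, s', s''; rewrite -Ew'' ss'.
Qed.

Lemma simple_sreach_path_ad :
  simple_tgraph G -> sreach G a c -> sreach G b d -> sreach G a d.
Proof.
move=> simple /sreach_path_ac [t1 [t2 [ab bc t12]]].
move=> /sreach_path_bd [t2' [t3 [bc' cd t23]]].
have [t bcE] := simple _ _ (lab_edge bc).
have t2E : t2' = t2 by rewrite (bcE t2).1 // (bcE t2').1.
have [_ ad _ _] := path_distinct.
split; first exact/eqP.
exists [:: (b, t1); (c, t2); (d, t3)]; split=> //=.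
by rewrite ab bc cd t12 -t2E t23.
Qed.

End PathShaped.

Definition tpath4_times (i j : nat) : seq nat :=
  match i, j with
  | 0, 1 | 1, 0 => [:: 1]
  | 1, 2 | 2, 1 => [:: 1; 2]
  | 2, 3 | 3, 2 => [:: 2]
  | _, _ => [::]
  end.

Definition tpath4 : tgraph 'I_4 :=
  TGraph (fun u v : 'I_4 => tpath4_times u v != [::])
         (fun u v t => t \in tpath4_times u v).

Definition v0 : 'I_4 := @Ordinal 4 0 isT.
Definition v1 : 'I_4 := @Ordinal 4 1 isT.
Definition v2 : 'I_4 := @Ordinal 4 2 isT.
Definition v3 : 'I_4 := @Ordinal 4 3 isT.

Lemma ord4P (u : 'I_4) : [\/ u = v0, u = v1, u = v2 | u = v3].
Proof.
case: u => [[|[|[|[|//]]]] ?];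
  [constructor 1 | constructor 2 | constructor 3 | constructor 4]; exact: val_inj.
Qed.

Lemma tpath4_lab_edge u v t : lab tpath4 u v t -> edge tpath4 u v.
Proof. by rewrite /=; case: tpath4_times. Qed.

Lemma tpath4_valid : valid_tgraph tpath4.
Proof.
split; [|split; [|split; [|split]]] => [u v|u|u v t|u v t|u v] /=.
- by case: (ord4P u) => ->; case: (ord4P v) => ->.
- by case: (ord4P u) => ->.
- by case: (ord4P u) => ->; case: (ord4P v) => ->.
- exact: tpath4_lab_edge.
- by case: tpath4_times => // t s _; exists t; exact: mem_head.
Qed.

Lemma tpath4_nbr0 v : edge tpath4 v0 v -> v = v1.
Proof. by case: (ord4P v) => ->. Qed.

Lemma tpath4_nbr1 v : edge tpath4 v1 v -> v = v0 \/ v = v2.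
Proof. by case: (ord4P v) => ->; auto. Qed.

Lemma tpath4_nbr2 v : edge tpath4 v2 v -> v = v1 \/ v = v3.
Proof. by case: (ord4P v) => ->; auto. Qed.

Lemma tpath4_nbr1_rev v : edge tpath4 v1 v -> v = v2 \/ v = v0.
Proof. by case: (ord4P v) => ->; auto. Qed.

Lemma tpath4_nbr2_rev v : edge tpath4 v2 v -> v = v3 \/ v = v1.
Proof. by case: (ord4P v) => ->; auto. Qed.

Lemma tpath4_nbr3 v : edge tpath4 v3 v -> v = v2.
Proof. by case: (ord4P v) => ->. Qed.

Lemma tpath4_sreach02 : sreach tpath4 v0 v2.
Proof. by split=> //; exists [:: (v1, 1); (v2, 2)]. Qed.

Lemma tpath4_sreach13 : sreach tpath4 v1 v3.
Proof. by split=> //; exists [:: (v2, 1); (v3, 2)]. Qed.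

Lemma tpath4_not_sreach03 : ~ sreach tpath4 v0 v3.
Proof.
move/(sreach_path_ad tpath4_lab_edge tpath4_nbr0 tpath4_nbr1 tpath4_nbr2 isT).
by case=> t1 [t2 [t3 []]]; rewrite /= !inE => /eqP-> /orP[]/eqP-> /eqP->.
Qed.

Lemma tpath4_not_sreach31 : ~ sreach tpath4 v3 v1.
Proof.
move/(sreach_path_ac (d := v0) tpath4_lab_edge tpath4_nbr3 tpath4_nbr2_rev isT).
by case=> t1 [t2 []]; rewrite /= !inE => /eqP-> /orP[]/eqP->.
Qed.

Lemma tpath4_not_sreach20 : ~ sreach tpath4 v2 v0.
Proof.
move/(sreach_path_bd tpath4_lab_edge tpath4_nbr3 tpath4_nbr2_rev
                     tpath4_nbr1_rev isT).
by case=> t2 [t3 []]; rewrite /= !inE => /orP[]/eqP-> /eqP->.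
Qed.

Lemma tpath4_sreach_sym_edge u v :
  sreach tpath4 u v -> sreach tpath4 v u -> edge tpath4 u v.
Proof.
case: (ord4P u) => ->; case: (ord4P v) => -> uv vu //; exfalso;
  by [case: uv => /(_ erefl) | apply: tpath4_not_sreach03
     | apply: tpath4_not_sreach31 | apply: tpath4_not_sreach20].
Qed.

Lemma sreach_iso_edge (V W : finType) (G : tgraph V) (H : tgraph W)
    (f : V -> W) u v :
  valid_tgraph H -> (forall u v, sreach G u v <-> sreach H (f u) (f v)) ->
  edge H (f u) (f v) -> sreach G u v /\ sreach G v u.
Proof.
move=> validH iso uv; have [edge_sym _] := validH.
by split; apply/iso/edge_sreach; rewrite // edge_sym.
Qed.

Theorem mainTheorem2 :
  exists (V : finType) (G : tgraph V),
    valid_tgraph G /\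
    forall (W : finType) (H : tgraph W),
      valid_tgraph H -> simple_tgraph H ->
      ~ digraph_iso (sreach G) (sreach H).
Proof.
exists 'I_4, tpath4; split; first exact: tpath4_valid.
move=> W H validH simpleH [f [[g fK gK] iso]].
have edge_tpath4 u y : edge H (f u) y -> edge tpath4 u (g y).
  rewrite -{1}[y]gK => /(sreach_iso_edge validH iso)[].
  exact: tpath4_sreach_sym_edge.
have [_ [_ [_ [lab_edgeH _]]]] := validH.
have reach_ac := (iso v0 v2).1 tpath4_sreach02.
have reach_bd := (iso v1 v3).1 tpath4_sreach13.
apply/tpath4_not_sreach03/iso.
apply: (simple_sreach_path_ad lab_edgeH _ _ _ _ simpleH reach_ac reach_bd).
- by move=> y /edge_tpath4/tpath4_nbr0 <-; rewrite gK.
- by move=> y /edge_tpath4/tpath4_nbr1[] <-; rewrite gK; [left | right].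
- by move=> y /edge_tpath4/tpath4_nbr2[] <-; rewrite gK; [left | right].
- by rewrite (map_inj_uniq (can_inj fK) [:: v0; v1; v2; v3]).
Qed.
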